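(* Let $\mathcal X\subseteq\mathbb R^{d'}$, $d'\in\mathbb N$, and let $\mu$ be a probability measure on $\mathcal X$. Let $\sigma_h:\mathbb R\to\mathbb R$ be bounded, differentiable with $\sigma_h(0)=0$, $\sigma_h'(0)\neq0$ and $\sigma_h'$ bounded and Lipschitz. Let $\Phi=\{\phi_\theta:\theta\in\Theta\}\subseteq L^2(\mu)\cap L^\infty(\mu)$ be star-shaped at $0$ (i.e. $\lambda\phi\in\Phi$ for all $\phi\in\Phi$, $\lambda\in[0,1]$) and such that $\mathrm{span}\{\phi_\theta:\theta\in\Theta\}$ is dense in $L^2(\mu)$. Then $\mathrm{span}\{\sigma_h\circ\phi_\theta:\theta\in\Theta\}$ is dense in $L^2(\mu)$. *)

From HB Require Import structures.
From mathcomp Require Import all_boot all_order all_algebra.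
From mathcomp Require Import all_classical all_reals all_analysis.
Set Implicit Arguments. Unset Strict Implicit. Unset Printing Implicit Defensive.
Import Order.TTheory GRing.Theory Num.Theory.
Import numFieldNormedType.Exports.
Local Open Scope classical_set_scope.
Local Open Scope ring_scope.

Definition Rn (R : realType) (n : nat) := g_sigma_algebraType (@open 'rV[R]_n).

Section defs.
Context {d} {T : measurableType d} {R : realType}.
Variable mu : {measure set T -> \bar R}.

Definition L2 (f : T -> R) : Prop :=
  measurable_fun setT f /\ (Lnorm mu 2%:E (fun x => (f x)%:E) < +oo)%E.

Definition Linfty (f : T -> R) : Prop :=
  measurable_fun setT f /\ exists M : R, {ae mu, forall x, `|f x| <= M}.

Definition in_span {Theta : Type} (phi : Theta -> T -> R) (g : T -> R) : Prop :=
  exists (n : nat) (c : 'I_n -> R) (t : 'I_n -> Theta),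
    g = fun x => \sum_(i < n) c i * phi (t i) x.

Definition L2_dense_span {Theta : Type} (phi : Theta -> T -> R) : Prop :=
  forall f : T -> R, L2 f -> forall eps : R, 0 < eps ->
    exists g : T -> R, in_span phi g /\
      (Lnorm mu 2%:E (fun x => (f x - g x)%:E) < eps%:E)%E.

(* Phi = {phi t} is star-shaped at 0 (as a subset of L^2(mu)) *)
Definition star_shaped0 {Theta : Type} (phi : Theta -> T -> R) : Prop :=
  forall (t : Theta) (lam : R), 0 <= lam <= 1 ->
    exists t' : Theta, {ae mu, forall x, phi t' x = lam * phi t x}.
End defs.

(** Approximate f in L^2 by g = \sum_i c_i phi_(t_i).  By star-shapedness each
    phi_(t_i) may be replaced by lam * phi_(t_i), and since sigma' is Lipschitz,
    sigma (lam y) = lam sigma'(0) y + O(lam^2 y^2) uniformly in y.  As the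
    phi_(t_i) are essentially bounded, \sum_i c_i / (lam sigma'(0)) sigma o phi_(t_i)
    is within O(lam) of g almost everywhere, hence in L^2 on a probability space. *)

From HB Require Import structures.
From mathcomp Require Import all_boot all_order all_algebra.
From mathcomp Require Import all_classical all_reals all_analysis.
From mathcomp Require Import ring measurable_realfun.
Set Implicit Arguments. Unset Strict Implicit. Unset Printing Implicit Defensive.
Import Order.TTheory GRing.Theory Num.Theory.
Import numFieldNormedType.Exports.
Local Open Scope classical_set_scope.
Local Open Scope ring_scope.

Section linearization.
Variables (R : realType) (f : R -> R).
Hypothesis f_derivable : forall x, derivable f x 1.

Lemma MVT_at0 (y : R) : exists2 c, `|c| <= `|y| & f y - f 0 = derive1 f c * y.
Proof.
have df (x : R) : is_derive x 1 f (derive1 f x).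
  by rewrite derive1E; exact: derivableP.
have fcont : {within `[_, _], continuous f}.
  by move=> a b; apply: derivable_within_continuous => x _.
case: (ltgtP y 0) => [y0|y0|->]; last by exists 0; rewrite ?normr0 ?mulr0 ?subrr.
- have [c] := MVT y0 (fun x _ => df x) (fcont y 0).
  rewrite in_itv /= => /andP[yc c0] e.
  exists c; first by rewrite !ltr0_norm ?lerN2 ?ltW // (lt_trans yc).
  by apply/eqP; rewrite -opprB e sub0r mulrN opprK.
- have [c] := MVT y0 (fun x _ => df x) (fcont 0 y).
  rewrite in_itv /= subr0 => /andP[c0 cy] ->.
  by exists c; rewrite // !gtr0_norm ?ltW // (lt_trans c0).
Qed.

Variable L : R.
Hypothesis f'_lipschitz :
  forall x y, `|derive1 f x - derive1 f y| <= L * `|x - y|.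

Lemma lipschitz_ge0 : 0 <= L.
Proof.
by have := f'_lipschitz 1 0; rewrite subr0 normr1 mulr1; apply: le_trans.
Qed.

Lemma taylor1_le (y : R) : `|f y - f 0 - derive1 f 0 * y| <= L * y ^+ 2.
Proof.
have [c cy ->] := MVT_at0 y.
rewrite -mulrBl normrM -(ger0_norm (sqr_ge0 y)) normrX expr2 mulrA ler_wpM2r //.
apply: (le_trans (f'_lipschitz c 0)); rewrite subr0 ler_wpM2l //.
exact: lipschitz_ge0.
Qed.

Lemma rescaled_quotient_dist (lam y : R) : f 0 = 0 -> derive1 f 0 != 0 ->
  0 < lam -> `|y - f (lam * y) / (lam * derive1 f 0)| <=
             L * lam / `|derive1 f 0| * y ^+ 2.
Proof.
move=> f0 f'0 lam0; set s0 := derive1 f 0.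
have -> : y - f (lam * y) / (lam * s0) =
          - (f (lam * y) - f 0 - s0 * (lam * y)) / (lam * s0).
  by rewrite f0; field; rewrite f'0 gt_eqF.
rewrite normrM normrN normfV normrM (gtr0_norm lam0) ler_pdivrMr; last first.
  by rewrite mulr_gt0 // normr_gt0.
have -> : L * lam / `|s0| * y ^+ 2 * (lam * `|s0|) = L * (lam * y) ^+ 2.
  by field; rewrite normr_eq0.
exact: taylor1_le.
Qed.

End linearization.

Lemma derivable_measurable_fun (R : realType) (f : R -> R) :
  (forall x, derivable f x 1) -> measurable_fun setT f.
Proof.
move=> df; apply: continuous_measurable_fun => x.
by apply/differentiable_continuous; rewrite -derivable1_diffP.
Qed.

Lemma in_span_measurable d (T : measurableType d) (R : realType) (Theta : Type)
    (phi : Theta -> T -> R) (g : T -> R) :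
  (forall t, measurable_fun setT (phi t)) -> in_span phi g ->
  measurable_fun setT g.
Proof.
move=> mphi [n [c [t ->]]]; apply: measurable_sum => i.
by apply: measurable_funM => //; exact: measurable_cst.
Qed.

Section Lnorm_bounds.
Context d {T : measurableType d} {R : realType}.
Local Open Scope ereal_scope.

Lemma Lnorm_le_ae_bound (mu : probability T R) (p : R) (E : T -> R) (C : R) :
  (0 < p)%R -> measurable_fun setT E -> (0 <= C)%R ->
  {ae mu, forall x, `|E x| <= C}%R -> 'N[mu]_p%:E[EFin \o E] <= C%:E.
Proof.
move=> p0 mE C0 aeE; rewrite unlock /=.
have int_le : \int[mu]_x (`|E x| `^ p)%:E <= (C `^ p)%:E.
  have -> : (C `^ p)%:E = \int[mu]_x cst (C `^ p)%:E x.
    by rewrite integral_cst // [X in _ * X](probability_setT mu) mule1.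
  apply: ae_ge0_le_integral => //.
  - apply/measurable_EFinP/(measurableT_comp (measurable_powR p)).
    exact: measurableT_comp.
  - by move=> x _; rewrite lee_fin powR_ge0.
  - apply: filterS aeE => x Ex _.
    by rewrite lee_fin ge0_ler_powR // ?nnegrE // ltW.
apply: (le_trans (gt0_ler_poweR _ _ _ int_le)).
- by rewrite invr_ge0 ltW.
- by rewrite in_itv /= leey andbT integral_ge0 // => x _; rewrite lee_fin powR_ge0.
- by rewrite in_itv /= lee_fin powR_ge0 leey.
by rewrite poweR_EFin -powRrM mulfV ?gt_eqF // powRr1.
Qed.

Lemma Lnorm_sub_triangle_lt (mu : {measure set T -> \bar R}) (p a b : R)
    (f g h : T -> R) : (1 <= p)%R ->
  measurable_fun setT f -> measurable_fun setT g -> measurable_fun setT h ->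
  'N[mu]_p%:E[EFin \o (f \- g)%R] < a%:E ->
  'N[mu]_p%:E[EFin \o (g \- h)%R] <= b%:E ->
  'N[mu]_p%:E[EFin \o (f \- h)%R] < (a + b)%:E.
Proof.
move=> p1 mf mg mh fg gh.
have -> : (f \- h = (f \- g) \+ (g \- h))%R by apply/funext => x /=; ring.
apply: le_lt_trans
  (@minkowski_EFin _ _ _ mu _ _ _ (measurable_funB mf mg) (measurable_funB mg mh) p1) _.
have gh_fin : 'N[mu]_p%:E[EFin \o (g \- h)%R] \is a fin_num.
  by rewrite ge0_fin_numE ?Lnorm_ge0 // (le_lt_trans gh) ?ltry.
by rewrite EFinD; apply: lte_leD.
Qed.

End Lnorm_bounds.

Section sigma_span_approximation.
Context d {T : measurableType d} {R : realType}.
Variable mu : {measure set T -> \bar R}.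
Variables (sigma : R -> R) (L : R).
Hypothesis sigma_derivable : forall x, derivable sigma x 1.
Hypothesis sigma0 : sigma 0 = 0.
Hypothesis sigma'0 : derive1 sigma 0 != 0.
Hypothesis sigma'_lipschitz :
  forall x y, `|derive1 sigma x - derive1 sigma y| <= L * `|x - y|.
Variables (Theta : Type) (phi : Theta -> T -> R).
Hypothesis phi_star : star_shaped0 mu phi.

Let ae_filter : Filter (almost_everywhere mu) := ae_filter_ringOfSetsType mu.

Lemma span_sigma_ae_close (lam : R) (n : nat) (c : 'I_n -> R)
    (t : 'I_n -> Theta) (M : 'I_n -> R) : 0 < lam <= 1 ->
  (forall i, {ae mu, forall x, `|phi (t i) x| <= M i}) ->
  exists h, in_span (fun t => sigma \o phi t) h /\
    {ae mu, forall x, `|\sum_(i < n) c i * phi (t i) x - h x| <=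
       lam * (L / `|derive1 sigma 0| * \sum_(i < n) `|c i| * M i ^+ 2)}.
Proof.
move=> /andP[lam0 lam1] phiM; set s0 := derive1 sigma 0.
have /choice [t' phi_t'] : forall i, exists t',
    {ae mu, forall x, phi t' x = lam * phi (t i) x}.
  by move=> i; apply: phi_star; rewrite ltW.
exists (fun x => \sum_(i < n) c i / (lam * s0) * (sigma \o phi (t' i)) x).
split; first by exists n, (fun i => c i / (lam * s0)), t'.
have K0 : 0 <= L * lam / `|s0|.
  by rewrite divr_ge0 // mulr_ge0 ?(lipschitz_ge0 sigma'_lipschitz) // ltW.
apply: (filterS2 ae_filter _ (filter_forall ae_filter phi_t')
  (filter_forall ae_filter phiM)) => x t'x Mx.
rewrite -sumrB mulrA mulr_sumr; apply: (le_trans (ler_norm_sum _ _ _)).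
apply: ler_sum => i _; rewrite /= t'x.
have -> : c i * phi (t i) x - c i / (lam * s0) * sigma (lam * phi (t i) x) =
    c i * (phi (t i) x - sigma (lam * phi (t i) x) / (lam * s0)) by ring.
have -> : lam * (L / `|s0|) * (`|c i| * M i ^+ 2) =
    `|c i| * (L * lam / `|s0| * M i ^+ 2) by ring.
rewrite normrM ler_wpM2l //.
apply: le_trans (rescaled_quotient_dist sigma_derivable sigma'_lipschitz _
  sigma0 sigma'0 lam0) _.
rewrite ler_wpM2l // -(real_normK (num_real (phi (t i) x))) !expr2.
exact: ler_pM.
Qed.

Lemma span_sigma_ae_approx (g : T -> R) : in_span phi g ->
  (forall t, exists M, {ae mu, forall x, `|phi t x| <= M}) ->
  forall eps, 0 < eps -> exists h, in_span (fun t => sigma \o phi t) h /\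
    {ae mu, forall x, `|g x - h x| <= eps}.
Proof.
move=> [n [c [t ->]]] phi_bounded eps eps0.
have /choice [M phiM] := fun i => phi_bounded (t i).
set K := L / `|derive1 sigma 0| * \sum_(i < n) `|c i| * M i ^+ 2.
have K0 : 0 <= K.
  rewrite mulr_ge0 ?divr_ge0 ?(lipschitz_ge0 sigma'_lipschitz) //.
  by rewrite sumr_ge0 // => i _; rewrite mulr_ge0 ?sqr_ge0.
set lam := Num.min 1 (eps / (K + 1)).
have lamK : lam * (K + 1) <= eps.
  by rewrite -ler_pdivlMr ?ltr_wpDl // ge_min lexx orbT.
have lam0 : 0 < lam by rewrite lt_min ltr01 divr_gt0 // ltr_wpDl.
have lam01 : 0 < lam <= 1 by rewrite lam0 ge_min lexx.
have [h [h_span gh]] := span_sigma_ae_close c lam01 phiM.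
exists h; split => //; apply: filterS gh => x /le_trans; apply.
by apply: le_trans lamK; rewrite ler_pM2l // lerDl.
Qed.

End sigma_span_approximation.

Theorem mainTheorem5 (R : realType) (d' : nat) (X : set (Rn R d'))
    (mu : probability (Rn R d') R)
    (sigma : R -> R) (Theta : Type) (phi : Theta -> Rn R d' -> R) :
  mu.-negligible (~` X) ->
  (exists M : R, forall x, `|sigma x| <= M) ->
  (forall x, derivable sigma x 1) ->
  sigma 0 = 0 ->
  derive1 sigma 0 != 0 ->
  (exists M : R, forall x, `|derive1 sigma x| <= M) ->
  (exists L : R, forall x y, `|derive1 sigma x - derive1 sigma y| <= L * `|x - y|) ->
  (forall t, L2 mu (phi t) /\ Linfty mu (phi t)) ->
  star_shaped0 mu phi ->
  L2_dense_span mu phi ->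
  L2_dense_span mu (fun t => sigma \o phi t).
Proof.
move=> _ _ sigma_der sigma0 sigma'0 _ [L sigma'_lip] phi_L2_Linfty phi_star
  phi_dense f f_L2 eps eps0.
have mphi t : measurable_fun setT (phi t) by case: (phi_L2_Linfty t) => [[]].
have msigma_phi t : measurable_fun setT (sigma \o phi t).
  by apply: measurableT_comp => //; exact: derivable_measurable_fun.
have eps2 : 0 < eps / 2 by rewrite divr_gt0.
have [g [g_span fg]] := phi_dense f f_L2 (eps / 2) eps2.
have [h [h_span gh]] := span_sigma_ae_approx sigma_der sigma0 sigma'0
  sigma'_lip phi_star g_span (fun t => (phi_L2_Linfty t).2.2) eps2.
exists h; split => //; rewrite [eps]splitr.
have mg := in_span_measurable mphi g_span.
have mh := in_span_measurable msigma_phi h_span.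
apply: (Lnorm_sub_triangle_lt _ f_L2.1 mg mh fg); first by rewrite ler1n.
by apply: Lnorm_le_ae_bound gh; rewrite ?ltW //; exact: measurable_funB.
Qed.
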